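(* Let $A,B\in\mathcal{M}_n$, let $\psi\colon H^*(M(A);\mathbb{Z})\to H^*(M(B);\mathbb{Z})$ be a graded ring isomorphism (also denoting its rationalization by $\psi$), and let $\sigma$ be a permutation of $\{1,\dots,n\}$ and $q_1,\dots,q_n$ nonzero rationals with $\psi(y^A_j)=q_jy^B_{\sigma(j)}$ for all $j$. Fix $j\in\{1,\dots,n\}$ and suppose $a\in\mathbb{Z}\setminus\{0\}$, $u\in H^2(M(B);\mathbb{Z})$ and $k\in\{1,\dots,n\}$ satisfy $u(u+a\alpha^B_k)=0$ and $\mathrm{ht}(u)<k$. (i) If $(\psi(x^A_j),\psi(x^A_j-\alpha^A_j))=(ax^B_k+u,\ a(x^B_k-\alpha^B_k)-u)$, then $q_j=a$, $k=\sigma(j)$, and $a^i_j=0$ for every $i$ with $\sigma(i)>\sigma(j)$. (ii) If $(\psi(x^A_j),\psi(x^A_j-\alpha^A_j))=(ax^B_k+u,\ -a(x^B_k-\alpha^B_k)+u)$, then $\alpha^A_j=2aq_i^{-1}y^A_i$ for some $i<j$.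
   Context: Let $\mathcal{M}_n$ be the set of integral strictly upper triangular $n\times n$ matrices $A=(A^i_j)$ ($A^i_j$ is the $(i,j)$ entry, and $A^i_j=0$ for $i\ge j$). For $A\in\mathcal{M}_n$, $M(A)$ denotes the Bott manifold obtained as the quotient of $(S^3)^n$ ($S^3\subset\mathbb{C}^2$ the unit sphere) by the free $(S^1)^n$-action $(g_1,\dots,g_n)\cdot((z_1,w_1),\dots,(z_n,w_n))=\big(((\prod_{k<j}g_k^{-A^k_j})g_jz_j,\ g_jw_j)\big)_{j=1}^n$. Let $x^A_j\in H^2(M(A);\mathbb{Z})$ be the first Chern class of the line bundle obtained as the quotient of $(S^3)^n\times\mathbb{C}$ where $g$ acts on the $\mathbb{C}$-factor by $g_j^{-1}$. Put $\alpha^A_j=\sum_{i<j}A^i_jx^A_i$. Then $H^*(M(A);\mathbb{Z})=\mathbb{Z}[x^A_1,\dots,x^A_n]/((x^A_j)^2-\alpha^A_jx^A_j\mid j=1,\dots,n)$. Define $y^A_j=x^A_j-\tfrac12\alpha^A_j\in H^2(M(A);\mathbb{Q})$. Let $a^i_j$ denote the $(i,j)$ entry of the matrix $(E-\tfrac12A)^{-1}$ ($E$ the identity matrix), so that $x^A_j=\sum_{i\le j}a^i_jy^A_i$. The same notation is used for $B$. For $v=\sum_i c_ix^B_i\in H^2(M(B);\mathbb{Z})$, the height $\mathrm{ht}(v)$ is $\max\{i\mid c_i\neq0\}$ (taken to be $0$ if $v=0$). *)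

From mathcomp Require Import all_boot all_order all_algebra all_fingroup.
From mathcomp Require Import mpoly.
Set Implicit Arguments. Unset Strict Implicit. Unset Printing Implicit Defensive.
Import Order.TTheory GRing.Theory Num.Theory.
Local Open Scope ring_scope.

(* Indices 1..n of the paper are the ordinals 'I_n (0..n-1). *)

(* A in M_n : integral strictly upper triangular n x n matrix *)
Definition strict_upper n (A : 'M[int]_n) : Prop :=
  forall i j : 'I_n, (j <= i)%N -> A i j = 0.

(* Elements of H^2(M(A);R) (R = int or rat) are written in the basis
   x^A_1..x^A_n as column vectors of coordinates. *)
Definition xvec (R : nzRingType) n (j : 'I_n) : 'cV[R]_n :=
  \col_i (if i == j then 1 else 0).

Definition alpha n (A : 'M[int]_n) (j : 'I_n) : 'cV[int]_n :=
  \col_i (if (i < j)%N then A i j else 0).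

Definition ratmx m p (M : 'M[int]_(m, p)) : 'M[rat]_(m, p) := map_mx intr M.

Definition yvec n (A : 'M[int]_n) (j : 'I_n) : 'cV[rat]_n :=
  ratmx (xvec _ j) - 2^-1 *: ratmx (alpha A j).

Definition acoef n (A : 'M[int]_n) (i j : 'I_n) : rat :=
  invmx (1%:M - 2^-1 *: ratmx A) i j.

(* height of v = sum_i c_i x_i : max{ i | c_i <> 0 } (1-indexed), 0 if v = 0 *)
Definition ht n (v : 'cV[int]_n) : nat :=
  \max_(i : 'I_n | v i 0 != 0) i.+1.

(* linear form sum_i v_i X_i in Z[X_1..X_n] representing v in H^2 *)
Definition linform n (v : 'cV[int]_n) : {mpoly int[n]} :=
  \sum_(i < n) v i 0 *: 'X_i.

Definition rel n (A : 'M[int]_n) (j : 'I_n) : {mpoly int[n]} :=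
  'X_j ^+ 2 - linform (alpha A j) * 'X_j.

(* membership in the ideal I_A = ( x_j^2 - alpha_j x_j | j ),
   so that H^*(M(A);Z) = Z[x_1..x_n] / I_A; p = 0 in H^*(M(A)) iff inI A p *)
Definition inI n (A : 'M[int]_n) (p : {mpoly int[n]}) : Prop :=
  exists c : 'I_n -> {mpoly int[n]}, p = \sum_(j < n) c j * rel A j.

(* the ring endomorphism of Z[x_1..x_n] sending x_j to the linear form given
   by the j-th column of P; every graded ring map H^*(M(A)) -> H^*(M(B))
   lifts uniquely (on generators) to such a substitution, where column j of P
   is the image of x^A_j in H^2(M(B);Z) in the basis x^B. *)
Definition subst n (P : 'M[int]_n) (p : {mpoly int[n]}) : {mpoly int[n]} :=
  p \mPo [tuple linform (col j P) | j < n].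

Definition induces_hom n (A B P : 'M[int]_n) : Prop :=
  forall p, inI A p -> inI B (subst P p).

Definition graded_ring_iso n (A B P : 'M[int]_n) : Prop :=
  induces_hom A B P /\
  exists Q : 'M[int]_n, induces_hom B A Q /\
    (forall p, inI A (subst Q (subst P p) - p)) /\
    (forall p, inI B (subst P (subst Q p) - p)).

(* Rationally, the classes y^B_l form a unitriangular basis of H^2(M(B)),
   and psi sends the basis y^A to it up to the permutation sigma and the
   scalars q.  Hence psi is injective, and comparing coefficients in the
   y^B basis is a triangular computation.
   (i) Averaging the two given images gives psi(y^A_j) = a y^B_k, so k =
   sigma j and q_j = a.  Expanding x^A_j = sum_i a^i_j y^A_i, the image
   a x^B_k + u has no component above k, which kills a^i_j q_i whenever
   sigma i > k.
   (ii) Subtracting the two given images gives psi(alpha^A_j) = 2a y^B_k =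
   psi(2a/q_i y^A_i) for i = sigma^-1 k; injectivity gives
   alpha^A_j = 2a/q_i y^A_i, and reading off the i-th coordinate forces
   i < j. *)
From mathcomp Require Import all_boot all_order all_algebra all_fingroup.
From mathcomp Require Import mpoly.
From mathcomp Require Import zify ring lra.
Set Implicit Arguments. Unset Strict Implicit.
Import Order.TTheory GRing.Theory Num.Theory.
Local Open Scope ring_scope.

Section YBasis.
Variables (n : nat) (A : 'M[int]_n).

Lemma yvecE (l r : 'I_n) :
  yvec A l r 0 =
  (r == l)%:R - 2^-1 * (if (r < l)%N then (A r l)%:~R else 0).
Proof. by rewrite !mxE; case: (r == l); case: (r < l)%N. Qed.

Lemma yvec_diag (l : 'I_n) : yvec A l l 0 = 1.
Proof. by rewrite yvecE eqxx ltnn mulr0 subr0. Qed.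

Lemma yvec_lt (l r : 'I_n) : (l < r)%N -> yvec A l r 0 = 0.
Proof.
move=> lt_lr; rewrite yvecE ltnNge (ltnW lt_lr) mulr0 subr0.
by rewrite -(inj_eq val_inj) /= gtn_eqF.
Qed.

Lemma yvec_half_sum (j : 'I_n) :
  yvec A j = 2^-1 *: (ratmx (xvec _ j) + ratmx (xvec _ j - alpha A j)).
Proof.
apply/matrixP => r z; rewrite !mxE !(rmorphB, rmorphD) /=.
by field.
Qed.

Lemma alpha_diff (j : 'I_n) :
  ratmx (alpha A j) = ratmx (xvec _ j) - ratmx (xvec _ j - alpha A j).
Proof. by apply/matrixP => r z; rewrite !mxE rmorphB /= opprB addrC subrK. Qed.

Lemma alpha_scaled_yvec_lt (i j : 'I_n) (c : rat) : c != 0 ->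
  ratmx (alpha A j) = c *: yvec A i -> (i < j)%N.
Proof.
move=> nz_c /matrixP/(_ i 0); rewrite [in RHS]mxE yvec_diag mulr1 !mxE.
by case: ltnP => // _ /esym/eqP; rewrite (negbTE nz_c).
Qed.

(* The paper's matrix E - A/2; its columns are the y^A_l. *)
Definition half_shift : 'M[rat]_n := 1%:M - 2^-1 *: ratmx A.

Hypothesis hA : strict_upper A.

Lemma half_shift_unit : half_shift \in unitmx.
Proof.
rewrite unitmxE -det_tr det_trig.
  by rewrite big1 ?unitr1 // => i _; rewrite !mxE hA // eqxx /=; lra.
apply/is_trig_mxP => i j lt_ji; rewrite !mxE hA ?(ltnW lt_ji) //.
by rewrite -(inj_eq val_inj) /= (gtn_eqF lt_ji) /=; lra.
Qed.

Lemma yvec_expansion (w : 'cV[rat]_n) :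
  w = \sum_l (invmx half_shift *m w) l 0 *: yvec A l.
Proof.
apply/matrixP => r z; rewrite (ord1 z) summxE.
rewrite -{1}[w]mul1mx -(mulmxV half_shift_unit) -mulmxA mxE.
apply: eq_bigr => l _; rewrite [in RHS]mxE yvecE mulrC !mxE; congr (_ * _).
by case: ltnP => // le_lr; rewrite hA.
Qed.

Lemma ycoord_xvec (i j : 'I_n) :
  (invmx half_shift *m ratmx (xvec _ j)) i 0 = acoef A i j.
Proof.
rewrite mxE (bigD1 j) //= !mxE eqxx mulr1 big1 ?addr0 // => l ne_lj.
by rewrite !mxE (negbTE ne_lj) mulr0.
Qed.

End YBasis.

Lemma half_sum_images_yvec n (B : 'M[int]_n) (k : 'I_n) (a : int)
    (u : 'cV[int]_n) :
  2^-1 *: (ratmx (a *: xvec _ k + u) + ratmx (a *: (xvec _ k - alpha B k) - u))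
  = a%:~R *: yvec B k.
Proof.
apply/matrixP => r z; rewrite !mxE !(rmorphB, rmorphD, rmorphN, rmorphM) /=.
by field.
Qed.

Lemma diff_images_yvec n (B : 'M[int]_n) (k : 'I_n) (a : int)
    (u : 'cV[int]_n) :
  ratmx (a *: xvec _ k + u) - ratmx (- (a *: (xvec _ k - alpha B k)) + u)
  = (2 * a%:~R) *: yvec B k.
Proof.
apply/matrixP => r z; rewrite !mxE !(rmorphB, rmorphD, rmorphN, rmorphM) /=.
by field.
Qed.

(* Downward induction on sigma i: the coordinate sigma i of the sum only sees
   the terms with sigma l >= sigma i, all of which vanish but the i-th. *)
Lemma sum_yvec_perm_coef_eq0 n (B : 'M[int]_n) (s : 'S_n) (c : 'I_n -> rat)
    (t : nat) :
  (forall r : 'I_n, (t <= r)%N -> (\sum_i c i *: yvec B (s i)) r 0 = 0) ->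
  forall i, (t <= s i)%N -> c i = 0.
Proof.
move=> hv i; have [m] := ubnP (n - s i); elim: m i => // m IH i hm le_ti.
have := hv _ le_ti; rewrite summxE (bigD1 i) //= mxE yvec_diag mulr1.
rewrite big1 ?addr0 // => l ne_li; rewrite mxE.
case: (ltngtP (s l) (s i)) => [lt_li | lt_il | /val_inj/perm_inj eq_li].
- by rewrite yvec_lt ?mulr0.
- by rewrite IH ?mul0r //; have := ltn_ord (s l); lia.
- by rewrite eq_li eqxx in ne_li.
Qed.

Lemma ht_coord_eq0 n (u : 'cV[int]_n) (k r : 'I_n) :
  (ht u < k.+1)%N -> (k < r)%N -> u r 0 = 0.
Proof.
move=> hht lt_kr; apply: contraTeq hht => nz_ur; rewrite -leqNgt.
exact: leq_ltn_trans (ltnW lt_kr)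
  (@leq_bigmax_cond _ _ (fun i : 'I_n => i.+1) r nz_ur).
Qed.

Section PermutedYBasis.
Variables (n : nat) (A B P : 'M[int]_n) (sigma : 'S_n) (q : 'I_n -> rat).
Hypotheses (hA : strict_upper A) (hq : forall j, q j != 0)
  (hy : forall j, ratmx P *m yvec A j = q j *: yvec B (sigma j)).

Lemma mulmx_yvec_expansion (w : 'cV[rat]_n) :
  ratmx P *m w =
  \sum_l ((invmx (half_shift A) *m w) l 0 * q l) *: yvec B (sigma l).
Proof.
rewrite {1}(yvec_expansion hA w) mulmx_sumr; apply: eq_bigr => l _.
by rewrite -scalemxAr hy scalerA.
Qed.

Lemma ycoord_eq0_high (w : 'cV[rat]_n) (t : nat) :
  (forall r : 'I_n, (t <= r)%N -> (ratmx P *m w) r 0 = 0) ->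
  forall l, (t <= sigma l)%N -> (invmx (half_shift A) *m w) l 0 = 0.
Proof.
rewrite mulmx_yvec_expansion => hv l le_tl.
have /eqP := sum_yvec_perm_coef_eq0 hv le_tl.
by rewrite mulf_eq0 (negbTE (hq l)) orbF => /eqP.
Qed.

Lemma ratmx_mulmx_inj (w : 'cV[rat]_n) : ratmx P *m w = 0 -> w = 0.
Proof.
move=> hw; rewrite (yvec_expansion hA w); apply: big1 => l _.
by rewrite (@ycoord_eq0_high _ 0) ?scale0r // => r _; rewrite hw mxE.
Qed.

Lemma mulmx_yvec_eq (j k : 'I_n) (c : rat) : c != 0 ->
  ratmx P *m yvec A j = c *: yvec B k -> k = sigma j /\ q j = c.
Proof.
move=> nz_c; rewrite hy => /matrixP hjk.
have coord r : q j * yvec B (sigma j) r 0 = c * yvec B k r 0.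
  by have := hjk r 0; rewrite !mxE.
have eq_k : k = sigma j.
  case: (ltngtP (sigma j) k) => [lt_jk | lt_kj | /val_inj //].
  - by have := coord k; rewrite yvec_lt // yvec_diag mulr0 mulr1 => /esym/eqP;
      rewrite (negbTE nz_c).
  - by have := coord (sigma j); rewrite yvec_diag yvec_lt // mulr0 mulr1
      => /eqP; rewrite (negbTE (hq j)).
by split=> //; have := coord k; rewrite -eq_k yvec_diag !mulr1.
Qed.

End PermutedYBasis.

Theorem lemma4p3 (n : nat) (A B P : 'M[int]_n)
  (hA : strict_upper A) (hB : strict_upper B)
  (hpsi : graded_ring_iso A B P)
  (sigma : 'S_n) (q : 'I_n -> rat) (hq : forall j, q j != 0)
  (hy : forall j : 'I_n,
      ratmx P *m yvec A j = q j *: yvec B (sigma j))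
  (j : 'I_n) (a : int) (ha : a != 0) (u : 'cV[int]_n) (k : 'I_n)
  (hu : inI B (linform u * linform (u + a *: alpha B k)))
  (hht : (ht u < k.+1)%N) :
  (P *m xvec _ j = a *: xvec _ k + u ->
   P *m (xvec _ j - alpha A j) = a *: (xvec _ k - alpha B k) - u ->
   [/\ q j = a%:~R, k = sigma j &
       forall i : 'I_n, (sigma j < sigma i)%N -> acoef A i j = 0])
  /\
  (P *m xvec _ j = a *: xvec _ k + u ->
   P *m (xvec _ j - alpha A j) = - (a *: (xvec _ k - alpha B k)) + u ->
   exists2 i : 'I_n, (i < j)%N &
     ratmx (alpha A j) = (2 * a%:~R / q i) *: yvec A i).
Proof.
have nz_a : (a%:~R : rat) != 0 by rewrite intr_eq0.
split=> [Px Pxa | Px Pxa].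
- have Py : ratmx P *m yvec A j = a%:~R *: yvec B k.
    by rewrite yvec_half_sum -scalemxAr mulmxDr -!map_mxM Px Pxa
      half_sum_images_yvec.
  have [eq_k eq_q] := mulmx_yvec_eq hq hy nz_a Py.
  split=> // i lt_ji; rewrite -ycoord_xvec.
  apply: (ycoord_eq0_high hA hq hy (t := k.+1)); last by rewrite eq_k.
  move=> r lt_kr; rewrite -map_mxM Px !mxE (ht_coord_eq0 hht lt_kr) addr0.
  by rewrite -(inj_eq val_inj) /= (gtn_eqF lt_kr) mulr0.
- have Palpha : ratmx P *m ratmx (alpha A j) = (2 * a%:~R) *: yvec B k.
    by rewrite alpha_diff mulmxBr -!map_mxM Px Pxa diff_images_yvec.
  pose i := (sigma^-1)%g k; set c := 2 * a%:~R / q i.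
  have alpha_eq : ratmx (alpha A j) = c *: yvec A i.
    apply/eqP; rewrite -subr_eq0; apply/eqP/(ratmx_mulmx_inj hA hq hy).
    by rewrite mulmxBr Palpha -scalemxAr hy permKV scalerA divfK ?subrr.
  exists i => //; apply: alpha_scaled_yvec_lt alpha_eq.
  by rewrite !mulf_eq0 invr_eq0 negb_or nz_a (hq i) andbT.
Qed.
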